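(* Let $n\geq 3$ be an integer and $p$ a prime with $\gcd(n,p(p-1))=1$. Then: (i) for every integer $r\geq\lfloor n/2\rfloor+1$ and all nonzero integers $a_1,\ldots,a_r$, the form $F=a_1x_1^n+\cdots+a_rx_r^n$ satisfies that $R(F)$ is dense in $\mathbb{Q}_p$; (ii) there exist nonzero integers $a_1,\ldots,a_s$ with $s=\lfloor n/2\rfloor$ such that for $F=a_1x_1^n+\cdots+a_sx_s^n$ the set $R(F)$ is not dense in $\mathbb{Q}_p$. Thus $\lfloor n/2\rfloor+1=\lceil (n+1)/2\rceil$ is the least $r$ such that every integral diagonal form of degree $n$ with all coefficients nonzero in at least $r$ variables has $R(F)$ dense in $\mathbb{Q}_p$.
   Context: For an integral form $F$ in $r$ variables, $R(F)=\{F(\overline{x})/F(\overline{y}):\overline{x},\overline{y}\in\mathbb{Z}^r,\ F(\overline{y})\neq 0\}$, viewed as a subset of the field $\mathbb{Q}_p$ of $p$-adic numbers with its $p$-adic topology. *)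

From HB Require Import structures.
From mathcomp Require Import all_boot all_order all_algebra.
Set Implicit Arguments. Unset Strict Implicit. Unset Printing Implicit Defensive.
Import Order.TTheory GRing.Theory Num.Theory.
Local Open Scope ring_scope.

Definition vp (p : nat) (q : rat) : int :=
  (logn p `|numq q|%N)%:Z - (logn p `|denq q|%N)%:Z.

Definition padic_abs (p : nat) (q : rat) : rat :=
  if q == 0 then 0 else (p%:R : rat) ^ (- vp p q).

(* A set S of rationals is dense in Q_p.  Since Q is dense in Q_p,
   this holds iff every rational is a p-adic limit of elements of S. *)
Definition dense_in_Qp (p : nat) (S : rat -> Prop) : Prop :=
  forall (x eps : rat), 0 < eps -> exists2 s, S s & padic_abs p (s - x) < eps.

Definition diag_form (r n : nat) (a : 'I_r -> int) (x : 'I_r -> int) : int :=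
  \sum_(i < r) a i * x i ^+ n.

Definition RF (r n : nat) (a : 'I_r -> int) : rat -> Prop :=
  fun q => exists x y : 'I_r -> int,
    diag_form n a y != 0 /\ q = (diag_form n a x)%:~R / (diag_form n a y)%:~R.

From mathcomp Require Import all_boot all_order all_algebra fingroup cyclic.
From mathcomp Require Import ring zify.
Import Order.TTheory GRing.Theory Num.Theory.
Set Implicit Arguments. Unset Strict Implicit.
Local Open Scope ring_scope.

(* Since gcd(n, p(p-1)) = 1, x |-> x^n permutes the units of Z/p^K for every K,
   so every rational whose p-adic valuation is divisible by n is a p-adic limit
   of n-th powers. As R(F) is stable under multiplication by n-th powers, it is
   dense as soon as the valuations of its nonzero elements meet every residue
   class mod n. With r > n/2 nonzero coefficients, either two coefficients have
   valuations congruent mod n, and then the binary form a_i x^n + a_j y^n takes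
   values of every valuation class, or the r residues v(a_i) mod n are distinct
   and by pigeonhole their differences cover Z/n.
   Conversely, for a_i = p^i (i < s = n/2) the monomials a_i x_i^n have
   valuations in distinct classes mod n, so v(F(x)) mod n lies in [0, s). As
   2s < n, no element of R(F) has valuation exactly s, and R(F) misses the
   ball of radius p^-s around p^s. *)

Lemma expn_unit_mod (m n u w : nat) : (0 < m)%N -> coprime (totient m) n ->
  coprime m u -> coprime m w -> exists2 z : nat, coprime m z & (z ^ n * w = u %[mod m])%N.
Proof.
move=> m_gt0 cn cu cw; have [m1 | m_gt1] := leqP m 1.
  by exists 1%N; rewrite ?coprimen1 // (_ : m = 1%N) ?modn1 //; lia.
have Uu : (u%:R : 'Z_m) \is a GRing.unit by rewrite unitZpE.
have Uw : (w%:R : 'Z_m) \is a GRing.unit by rewrite unitZpE.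
pose U := FinRing.unit 'Z_m Uu; pose W := FinRing.unit 'Z_m Uw.
have cG : coprime #|units_Zp m| n by rewrite card_units_Zp.
pose y := ((U * W^-1) ^+ expg_invn (units_Zp m) n)%g.
have hy : (y ^+ n = U * W^-1)%g by rewrite /y expgAC expgK // inE.
exists (FinRing.uval y : 'Z_m).
  by rewrite -unitZpE // natr_Zp; exact: valP.
suff E : ((FinRing.uval y ^ n * w)%:R : 'Z_m) = u%:R.
  by rewrite -!(val_Zp_nat m_gt1) E.
rewrite natrM natrX natr_Zp -FinRing.val_unitX hy (_ : w%:R = FinRing.uval W) //.
by rewrite -FinRing.val_unitM -mulgA mulVg mulg1.
Qed.

Lemma expz_unit_mod (m n : nat) (U W : int) : (0 < m)%N -> coprime (totient m) n ->
  coprime m `|U| -> coprime m `|W| ->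
  exists2 z : int, coprime m `|z| & (m%:Z %| z ^+ n * W - U)%Z.
Proof.
move=> m_gt0 cn cU cW.
have m0 : m%:Z != 0 by rewrite -lt0n.
have modE V : `|(V %% m)%Z|%:Z = (V %% m)%Z by rewrite gez0_abs // modz_ge0.
have cmod V : coprime m `|V| -> coprime m `|(V %% m)%Z|.
  move=> cV; change (coprimez m (V %% m)%Z); rewrite /coprimez gcdz_modr.
  exact: cV.
have [z cz hz] := expn_unit_mod m_gt0 cn (cmod U cU) (cmod W cW).
exists z%:Z => //; rewrite -eqz_mod_dvd -modzMmr -(modz_mod U) -(modE U) -(modE W).
by rewrite -!natz -natrX -natrM !natz !modz_nat hz.
Qed.

Lemma coprime_totient_pexpn (p n K : nat) : prime p -> coprime n (p * (p - 1)) ->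
  coprime (totient (p ^ K)) n.
Proof.
move=> pp; rewrite coprimeMr => /andP [cnp cnp1].
case: K => [|K]; first by rewrite expn0 /totient coprime1n.
by rewrite totient_pfactor // coprime_sym coprimeMr coprimeXr // -subn1 cnp1.
Qed.

Lemma PoszX (m k : nat) : (m ^ k)%N = m%:Z ^+ k :> int.
Proof. by rewrite -[LHS]natz natrX natz. Qed.

Section IntValuation.
Variable p : nat.
Hypothesis p_pr : prime p.

Lemma pfactor_dvdz (A : int) (k : nat) : A != 0 ->
  (p%:Z ^+ k %| A)%Z = (k <= logn p `|A|)%N.
Proof. by move=> A0; rewrite dvdzE abszX pfactor_dvdn // absz_gt0. Qed.

Lemma int_pfactor_decomp (A : int) : A != 0 ->
  exists2 A', A = p%:Z ^+ logn p `|A| * A' & ~~ (p %| `|A'|)%N.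
Proof.
move=> A0; have A_gt0 : (0 < `|A|)%N by rewrite absz_gt0.
have [m cpm hm] := pfactor_coprime p_pr A_gt0.
exists ((-1) ^+ (A < 0)%R * m%:Z); last first.
  by rewrite abszM abszX /= exp1n mul1n -prime_coprime.
by rewrite {1}(intEsign A) {1}hm PoszM PoszX; ring.
Qed.

Lemma logn_addr_dvd (A B : int) : A != 0 ->
  (p%:Z ^+ (logn p `|A|).+1 %| B)%Z ->
  A + B != 0 /\ logn p `|A + B| = logn p `|A|.
Proof.
move=> A0 dvdB; set k := logn p `|A| in dvdB *.
have ndvdAB : ~~ (p%:Z ^+ k.+1 %| A + B)%Z by rewrite rpredDr // pfactor_dvdz // ltnn.
have AB0 : A + B != 0 by apply: contra ndvdAB => /eqP ->; apply: dvdz0.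
split=> //; apply/eqP; rewrite eqn_leq leqNgt -!pfactor_dvdz // ndvdAB /=.
apply: rpredD; first by rewrite pfactor_dvdz.
exact: dvdz_trans (dvdz_exp2l _ (leqnSn k)) dvdB.
Qed.

Lemma logn_sum_injective (I : finType) (f : I -> int) (i0 : I) : f i0 != 0 ->
  {in [pred i | f i != 0] &, injective (fun i => logn p `|f i|)} ->
  exists2 i, f i != 0 & \sum_j f j != 0 /\ logn p `|\sum_j f j| = logn p `|f i|.
Proof.
move=> fi0 finj.
case: (@arg_minnP _ i0 (fun i => f i != 0) (fun i => logn p `|f i|) fi0) => i fi imin.
exists i => //; rewrite (bigD1 i) //=; apply: logn_addr_dvd => //.
apply: rpred_sum => j ji; have [-> | fj] := eqVneq (f j) 0; first exact: dvdz0.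
apply: dvdz_trans (_ : p%:Z ^+ logn p `|f j| %| f j)%Z; last by rewrite pfactor_dvdz.
rewrite dvdz_exp2l // ltn_neqAle imin // andbT.
by apply: contra ji => /eqP/(finj _ _ fi fj) ->.
Qed.

End IntValuation.

Section RatValuation.
Variable p : nat.
Hypothesis p_pr : prime p.

Let p_gt0 : (0 : rat) < p%:R. Proof. by rewrite ltr0n prime_gt0. Qed.
Let p_neq0 : (p%:R : rat) != 0. Proof. by rewrite gt_eqF. Qed.
Let p_ge1 : (1 : rat) <= p%:R. Proof. by rewrite ler1n prime_gt0. Qed.

Lemma vp_frac (A B : int) : A != 0 -> B != 0 ->
  vp p (A%:~R / B%:~R) = (logn p `|A|)%:Z - (logn p `|B|)%:Z.
Proof.
move=> A0 B0; set q : rat := A%:~R / B%:~R.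
have q0 : q != 0 by rewrite mulf_neq0 ?invr_eq0 ?intr_eq0.
have E : numq q * B = A * denq q.
  apply/eqP; rewrite -(@fracq_eq (numq q, denq q) (A, B)) ?denq_neq0 //.
  by rewrite !fracqE /= divq_num_den.
have := congr1 (fun z => logn p `|z|) E; rewrite /= !abszM !lognM ?absz_gt0 //.
  by rewrite /vp; lia.
by rewrite numq_eq0.
Qed.

Lemma vpM (x y : rat) : x != 0 -> y != 0 -> vp p (x * y) = vp p x + vp p y.
Proof.
move=> x0 y0; rewrite -[x]divq_num_den -[y]divq_num_den mulf_div -!rmorphM.
have nz z : z != 0 -> numq z != 0 by rewrite numq_eq0.
rewrite !vp_frac ?mulf_neq0 ?nz ?denq_neq0 //.
by rewrite !abszM !lognM ?absz_gt0 ?nz ?denq_neq0 // !PoszD; ring.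
Qed.

Lemma padic_abs0 : padic_abs p 0 = 0.
Proof. by rewrite /padic_abs eqxx. Qed.

Lemma padic_abs_ge0 (x : rat) : 0 <= padic_abs p x.
Proof. by rewrite /padic_abs; case: ifP; rewrite // exprz_ge0 // ltW. Qed.

Lemma padic_abs_gt0 (x : rat) : x != 0 -> 0 < padic_abs p x.
Proof. by move=> x0; rewrite /padic_abs (negbTE x0) exprz_gt0. Qed.

Lemma padic_absM (x y : rat) : padic_abs p (x * y) = padic_abs p x * padic_abs p y.
Proof.
have [-> | x0] := eqVneq x 0; first by rewrite mul0r padic_abs0 mul0r.
have [-> | y0] := eqVneq y 0; first by rewrite mulr0 padic_abs0 mulr0.
rewrite /padic_abs (negbTE (mulf_neq0 x0 y0)) (negbTE x0) (negbTE y0).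
by rewrite vpM // opprD expfzDr.
Qed.

Lemma vp_pexpn (k : nat) : vp p (p%:R ^+ k) = k.
Proof.
have pk0 : (p ^ k)%N%:Z != 0 by rewrite -lt0n expn_gt0 prime_gt0.
have -> : p%:R ^+ k = (p ^ k)%N%:Z%:~R / 1%:~R :> rat by rewrite divr1 -natrX.
by rewrite vp_frac //= pfactorK // logn1; lia.
Qed.

Lemma padic_abs_pexpn (k : nat) : padic_abs p (p%:R ^+ k) = p%:R ^ (- k%:Z).
Proof. by rewrite /padic_abs expf_eq0 (negbTE p_neq0) andbF vp_pexpn. Qed.

Lemma padic_abs_frac_le (D C : int) (k : nat) : ~~ (p %| `|C|)%N ->
  (p%:Z ^+ k %| D)%Z -> padic_abs p (D%:~R / C%:~R) <= p%:R ^ (- k%:Z).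
Proof.
move=> pC dvdD; have C0 : C != 0 by apply: contra pC => /eqP ->; rewrite dvdn0.
have [-> | D0] := eqVneq D 0; first by rewrite mul0r padic_abs0 exprz_ge0 // ltW.
rewrite /padic_abs mulf_eq0 invr_eq0 !intr_eq0 (negbTE C0) (negbTE D0) /=.
rewrite vp_frac // (@logn_coprime p `|C|) ?prime_coprime //.
by apply: ler_weXz2l => //; move: dvdD; rewrite pfactor_dvdz // => le_k; lia.
Qed.

Lemma exists_pexpz_lt (eps : rat) : 0 < eps -> exists K : nat, p%:R ^ (- K%:Z) < eps.
Proof.
move=> eps_gt0; pose K := Num.Def.archi_bound eps^-1; exists K.
have hK : eps^-1 < K%:R by apply: archi_boundP; rewrite invr_ge0 ltW.
have pK : (K%:R : rat) <= p%:R ^+ K by rewrite -natrX ler_nat ltnW // ltn_expl ?prime_gt1.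
rewrite -exprnN invf_plt ?posrE ?exprn_gt0 //.
exact: lt_le_trans hK pK.
Qed.

Lemma pexpz_lt1 (m : int) : (p%:R : rat) ^ m < 1 -> m < 0.
Proof.
move=> lt1; rewrite ltNge; apply: contraTN lt1 => m_ge0.
by rewrite -leNgt -(expr0z p%:R) ler_weXz2l.
Qed.

Lemma vp_eq0_of_lt1 (h : rat) : padic_abs p (h - 1) < 1 -> h != 0 /\ vp p h = 0.
Proof.
set C := numq h; set D := denq h; move=> lt1.
have D0 : D != 0 := denq_neq0 h.
have pCD : (p%:Z %| C - D)%Z.
  have [-> | CD0] := eqVneq (C - D) 0; first exact: dvdz0.
  have E : h - 1 = (C - D)%:~R / D%:~R.
    by rewrite -[h in LHS]divq_num_den rmorphB /= mulrBl divff ?intr_eq0.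
  move: lt1; rewrite E /padic_abs mulf_eq0 invr_eq0 !intr_eq0 (negbTE CD0) (negbTE D0).
  move=> /pexpz_lt1; rewrite vp_frac // -(expr1z p%:Z) => lt0.
  rewrite pfactor_dvdz //; lia.
have pC_iff : (p %| `|C|)%N = (p %| `|D|)%N.
  by change ((p%:Z %| C)%Z = (p%:Z %| D)%Z); rewrite -(rpredDl D pCD) subrK.
have ndvdC : ~~ (p %| `|C|)%N.
  apply/negP => pC; have := coprime_dvdl pC (coprime_num_den h).
  by rewrite prime_coprime // -pC_iff pC.
have C0 : C != 0 by apply: contra ndvdC => /eqP ->; rewrite dvdn0.
split; first by rewrite -numq_eq0.
by rewrite /vp !logn_coprime ?prime_coprime // -?pC_iff.
Qed.

Lemma vp_eq_of_lt (x y : rat) : x != 0 -> padic_abs p (y - x) < padic_abs p x ->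
  y != 0 /\ vp p y = vp p x.
Proof.
move=> x0 lt_yx.
have [h0 vph] : y / x != 0 /\ vp p (y / x) = 0.
  apply: vp_eq0_of_lt1; rewrite -(ltr_pM2r (padic_abs_gt0 x0)) mul1r.
  by rewrite -padic_absM // mulrDl mulNr divfK // mul1r.
have y0 : y != 0 by apply: contra h0 => /eqP ->; rewrite mul0r.
by split=> //; rewrite -(divfK x0 y) vpM ?vph ?add0r.
Qed.

Lemma rat_pfactor_decomp (y : rat) : y != 0 -> exists c d : int,
  [/\ ~~ (p %| `|c|)%N, ~~ (p %| `|d|)%N & y = p%:R ^ vp p y * (c%:~R / d%:~R)].
Proof.
move=> y0; have ny0 : numq y != 0 by rewrite numq_eq0.
have [c hc pc] := int_pfactor_decomp p_pr ny0.
have [d hd pd] := int_pfactor_decomp p_pr (denq_neq0 y).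
exists c, d; split=> //; rewrite /vp.
move: hc hd; set a := logn p `|numq y|; set b := logn p `|denq y| => hc hd.
rewrite expfzDr // -exprnN -exprnP -[y in LHS]divq_num_den hc hd !rmorphM /=.
have d0 : d != 0 by apply: contra pd => /eqP ->.
rewrite !rmorphXn /=; field.
by rewrite intr_eq0 d0 expf_neq0 // intr_eq0 eqz_nat -lt0n prime_gt0.
Qed.

Section NthPowers.
Variable n : nat.
Hypothesis n_gt0 : (0 < n)%N.
Hypothesis n_coprime : coprime n (p * (p - 1)).

Lemma expz_unit_mod_pexpn (U W : int) (K : nat) :
  ~~ (p %| `|U|)%N -> ~~ (p %| `|W|)%N ->
  exists2 z : int, ~~ (p %| `|z|)%N & ((p ^ K.+1)%N%:Z %| z ^+ n * W - U)%Z.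
Proof.
have cop V : ~~ (p %| `|V|)%N -> coprime (p ^ K.+1) `|V|.
  by rewrite coprime_pexpl // prime_coprime.
move=> /cop pU /cop pW; have pK_gt0 : (0 < p ^ K.+1)%N by rewrite expn_gt0 prime_gt0.
have [z cz dvd_z] := expz_unit_mod pK_gt0 (coprime_totient_pexpn K.+1 p_pr n_coprime) pU pW.
by exists z; rewrite // -prime_coprime // -(@coprime_pexpl K.+1).
Qed.

Lemma exprn_approx (y : rat) (K : nat) : y != 0 -> (n%:Z %| vp p y)%Z ->
  exists2 u : rat, u != 0 & padic_abs p (u ^+ n - y) <= padic_abs p y * p%:R ^ (- K%:Z).
Proof.
move=> y0 /dvdzP [m vp_y].
have [c [d [pc pd hy]]] := rat_pfactor_decomp y0.
have c0 : c != 0 by apply: contra pc => /eqP ->.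
have d0 : d != 0 by apply: contra pd => /eqP ->.
have [z pz dvd_z] := expz_unit_mod_pexpn K pc pd.
have z0 : z != 0 by apply: contra pz => /eqP ->.
exists (p%:R ^ m * z%:~R); first by rewrite mulf_neq0 ?expfz_neq0 ?intr_eq0.
have -> : (p%:R ^ m * z%:~R) ^+ n - y = y * ((z ^+ n * d - c)%:~R / c%:~R).
  rewrite exprMn exprnP exprz_exp -vp_y; move: hy; set v := vp p y => ->.
  by rewrite rmorphB rmorphM rmorphXn /=; field; rewrite !intr_eq0 c0 d0.
rewrite padic_absM // ler_pM2l ?padic_abs_gt0 // padic_abs_frac_le //.
by apply: dvdz_trans dvd_z; rewrite PoszX dvdz_exp2l.
Qed.

Lemma dense_of_vp_classes (S : rat -> Prop) :
  (forall q u, S q -> u != 0 -> S (u ^+ n * q)) ->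
  (forall t : int, exists2 q, S q & q != 0 /\ (n%:Z %| vp p q - t)%Z) ->
  dense_in_Qp p S.
Proof.
move=> S_scale S_vp x eps eps_gt0; have [-> | x0] := eqVneq x 0.
  have [q Sq [q0 _]] := S_vp 0.
  have [K hK] := exists_pexpz_lt (divr_gt0 eps_gt0 (padic_abs_gt0 q0)).
  exists ((p%:R ^+ K) ^+ n * q); first by apply: S_scale; rewrite // expf_neq0.
  rewrite subr0 padic_absM // -exprM padic_abs_pexpn // -ltr_pdivlMr ?padic_abs_gt0 //.
  by apply: le_lt_trans hK; apply: ler_weXz2l => //; nia.
have [q Sq [q0 dvd_q]] := S_vp (vp p x).
have y0 : x / q != 0 by rewrite mulf_neq0 ?invr_eq0.
have vp_y : (n%:Z %| vp p (x / q))%Z.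
  move: dvd_q; have := vpM y0 q0; rewrite divfK // => ->.
  by rewrite opprD addrC -addrA addNr addr0 rpredN.
have [K hK] := exists_pexpz_lt (divr_gt0 eps_gt0 (padic_abs_gt0 x0)).
have [u u0 hu] := exprn_approx K y0 vp_y.
exists (u ^+ n * q); first exact: S_scale.
rewrite -[x in _ - x](divfK q0) -mulrBl padic_absM //.
apply: le_lt_trans (ler_wpM2r (padic_abs_ge0 q) hu) _.
by rewrite mulrAC -padic_absM // divfK // mulrC -ltr_pdivlMr ?padic_abs_gt0 //.
Qed.

Lemma not_dense_of_vp_neq (S : rat -> Prop) (t : nat) :
  (forall q, S q -> q != 0 -> vp p q != t%:Z) -> ~ dense_in_Qp p S.
Proof.
move=> S_vp dense; have x0 : (p%:R ^+ t : rat) != 0 by rewrite expf_neq0.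
have [q Sq lt_q] := dense (p%:R ^+ t) _ (padic_abs_gt0 x0).
have [q0 vp_q] := vp_eq_of_lt x0 lt_q.
by have := S_vp q Sq q0; rewrite vp_q vp_pexpn // eqxx.
Qed.

End NthPowers.

End RatValuation.

Lemma mod_shift_pigeonhole (I : finType) (n e : nat) (f : I -> nat) :
  (0 < n)%N -> (n < #|I| + #|I|)%N -> injective (fun i => f i %% n)%N ->
  exists i j, (f i = f j + e %[mod n])%N.
Proof.
move=> n_gt0 n_lt finj.
have ginj : injective (fun j => (f j + e) %% n)%N.
  by move=> i j /eqP; rewrite eqn_modDr => /eqP /finj.
pose s1 := [seq f i %% n | i <- enum I]%N.
pose s2 := [seq (f j + e) %% n | j <- enum I]%N.
suff /hasP [_ /mapP [j _ ->] /mapP [i _ eq_ij]] : has (mem s1) s2.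
  by exists i, j; rewrite eq_ij.
apply/negPn/negP => disj.
have s_uniq : uniq (s1 ++ s2).
  by rewrite cat_uniq !map_inj_uniq // -enumT enum_uniq disj.
have s_sub : {subset s1 ++ s2 <= iota 0 n}.
  by move=> x; rewrite mem_cat mem_iota add0n => /orP [] /mapP [i _ ->]; rewrite ltn_mod.
have := uniq_leq_size s_uniq s_sub.
by rewrite size_cat !size_map size_iota -enumT -cardE leqNgt n_lt.
Qed.

Section DiagForm.
Variables (r n : nat) (a : 'I_r -> int).

Lemma diag_formZ (c : int) (x : 'I_r -> int) :
  diag_form n a (fun i => c * x i) = c ^+ n * diag_form n a x.
Proof.
by rewrite /diag_form big_distrr; apply: eq_bigr => i _; rewrite exprMn mulrCA.
Qed.

Hypothesis n_gt0 : (0 < n)%N.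

Lemma diag_form_delta (i : 'I_r) : diag_form n a (fun k => (k == i)%:R) = a i.
Proof.
rewrite /diag_form (bigD1 i) //= eqxx expr1n mulr1 big1 ?addr0 // => j /negbTE ->.
by rewrite expr0n gtn_eqF // mulr0.
Qed.

Lemma diag_form_delta2 (i j : 'I_r) (s t : int) : i != j ->
  diag_form n a (fun k => if k == i then s else if k == j then t else 0)
  = a i * s ^+ n + a j * t ^+ n.
Proof.
move=> ij; rewrite /diag_form (bigD1 i) //= eqxx (bigD1 j) 1?eq_sym //=.
rewrite (negbTE ij) eqxx big1 ?addr0 // => k /andP [/negbTE -> /negbTE ->].
by rewrite expr0n gtn_eqF // mulr0.
Qed.

Lemma RF_scale (q u : rat) : RF n a q -> u != 0 -> RF n a (u ^+ n * q).
Proof.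
move=> [x [y [Fy0 ->]]] u0.
exists (fun i => numq u * x i), (fun i => denq u * y i); rewrite !diag_formZ.
split; first by rewrite mulf_neq0 ?expf_neq0 ?denq_neq0.
by rewrite -[u in LHS]divq_num_den !rmorphM !rmorphXn expr_div_n mulf_div.
Qed.

End DiagForm.

Section Dense.
Variables p n : nat.
Hypothesis p_pr : prime p.
Hypothesis n_gt0 : (0 < n)%N.
Hypothesis n_coprime : coprime n (p * (p - 1)).

Lemma binary_form_logn (A B : int) (k : nat) : ~~ (p %| `|A|)%N -> ~~ (p %| `|B|)%N ->
  (0 < k)%N -> exists l : int, l ^+ n * A + B != 0 /\ logn p `|l ^+ n * A + B| = k.
Proof.
move=> pA pB k_gt0.
have pU : ~~ (p %| `|p%:Z ^+ k - B|)%N.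
  apply: contra pB => pU; change (p%:Z %| B)%Z.
  rewrite -(opprK B) rpredN -(rpredDl _ (dvdz_exp k_gt0 (dvdzz p%:Z))).
  exact: pU.
have [l _ dvd_l] := expz_unit_mod_pexpn p_pr n_coprime k pU pA.
have pk0 : p%:Z ^+ k != 0 by rewrite expf_neq0 // -lt0n prime_gt0.
have logpk : logn p `|p%:Z ^+ k| = k by rewrite abszX pfactorK.
exists l; have -> : l ^+ n * A + B = p%:Z ^+ k + (l ^+ n * A - (p%:Z ^+ k - B)).
  by rewrite opprB addrCA [_ + (B - _)]addrC subrK.
by have := logn_addr_dvd p_pr pk0; rewrite logpk -PoszX => /(_ _ dvd_l).
Qed.

Lemma diag_form_logn_any_residue r (a : 'I_r -> int) (i j : 'I_r) :
  i != j -> a i != 0 -> a j != 0 -> (logn p `|a i| = logn p `|a j| %[mod n])%N ->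
  forall e : nat, exists X, diag_form n a X != 0 /\
    (logn p `|diag_form n a X| = logn p `|a j| + e %[mod n])%N.
Proof.
move=> ij ai0 aj0 + e; have [A hA pA] := int_pfactor_decomp p_pr ai0.
have [B hB pB] := int_pfactor_decomp p_pr aj0.
move: hA hB; set al := logn p `|a i|; set be := logn p `|a j| => hA hB eq_mod.
have shift : (al + n * (be %/ n) = be + n * (al %/ n))%N.
  by rewrite [in LHS](divn_eq al n) [in RHS](divn_eq be n) eq_mod; ring.
have en_gt0 : (0 < e + n)%N by rewrite addn_gt0 n_gt0 orbT.
have [l [l0 logl]] := binary_form_logn pA pB en_gt0.
pose X k := if k == i then p%:Z ^+ (be %/ n) * l else if k == j then p%:Z ^+ (al %/ n) else 0.
exists X; have -> : diag_form n a X = p%:Z ^+ (al + n * (be %/ n)) * (l ^+ n * A + B).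
  rewrite diag_form_delta2 // hA hB mulrDr {2}shift !exprD !exprMn -!exprM !(mulnC n).
  ring.
have pc0 : p%:Z ^+ (al + n * (be %/ n)) != 0 by rewrite expf_neq0 // -lt0n prime_gt0.
split; first by rewrite mulf_neq0.
rewrite abszM lognM ?absz_gt0 // abszX pfactorK // logl shift addnACA -mulnSr.
by rewrite addnC mulnC modnMDl.
Qed.

Lemma diag_form_logn_shift r (a : 'I_r -> int) : (n./2 < r)%N -> (forall i, a i != 0) ->
  forall e : nat, exists X Y, [/\ diag_form n a X != 0, diag_form n a Y != 0 &
    (logn p `|diag_form n a X| = logn p `|diag_form n a Y| + e %[mod n])%N].
Proof.
move=> r_gt a0 e; have Fdelta := diag_form_delta a n_gt0.
have [/injectiveP finj | /injectivePn [i [j ij eq_ij]]] :=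
  boolP (injectiveb (fun i => logn p `|a i| %% n)%N).
- have n_lt : (n < #|'I_r| + #|'I_r|)%N.
    by rewrite card_ord; have := odd_double_half n; rewrite -addnn; case: (odd n) => /=; lia.
  have [i [j eq_ij]] := mod_shift_pigeonhole e n_gt0 n_lt finj.
  by exists (fun k => (k == i)%:R), (fun k => (k == j)%:R); rewrite !Fdelta.
- have [X [FX0 hX]] := diag_form_logn_any_residue ij (a0 i) (a0 j) eq_ij e.
  by exists X, (fun k => (k == j)%:R); rewrite Fdelta.
Qed.

Lemma RF_vp_classes r (a : 'I_r -> int) : (n./2 < r)%N -> (forall i, a i != 0) ->
  forall t : int, exists2 q, RF n a q & q != 0 /\ (n%:Z %| vp p q - t)%Z.
Proof.
move=> r_gt a0 t; set e := `|(t %% n)%Z|%N.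
have [X [Y [FX0 FY0 hXY]]] := diag_form_logn_shift r_gt a0 e.
exists ((diag_form n a X)%:~R / (diag_form n a Y)%:~R); first by exists X, Y.
split; first by rewrite mulf_neq0 ?invr_eq0 ?intr_eq0.
rewrite vp_frac //; move: hXY; set lX := logn p _; set lY := logn p _ => hXY.
have dvd_XY : (n%:Z %| lX%:Z - (lY + e)%N%:Z)%Z by rewrite -eqz_mod_dvd !modz_nat hXY.
have eE : e%:Z = (t %% n)%Z by rewrite gez0_abs // modz_ge0 // -lt0n.
have -> : lX%:Z - lY%:Z - t = lX%:Z - (lY + e)%N%:Z - (t %/ n)%Z * n.
  by rewrite {1}(divz_eq t n) -eE PoszD; ring.
by rewrite rpredB // dvdz_mull.
Qed.

Theorem diag_form_RF_dense r (a : 'I_r -> int) : (n./2 < r)%N -> (forall i, a i != 0) ->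
  dense_in_Qp p (RF n a).
Proof.
move=> r_gt a0; apply: (dense_of_vp_classes p_pr n_gt0 n_coprime).
  by move=> q u; apply: RF_scale.
exact: RF_vp_classes.
Qed.

End Dense.

Section NotDense.
Variables p n : nat.
Hypothesis p_pr : prime p.
Hypothesis n_gt0 : (0 < n)%N.

Definition pexp_coeffs {s : nat} (i : 'I_s) : int := p%:Z ^+ i.

Lemma logn_diag_form_pexp (s : nat) (X : 'I_s -> int) : (s <= n)%N ->
  diag_form n pexp_coeffs X != 0 -> (logn p `|diag_form n pexp_coeffs X| %% n < s)%N.
Proof.
move=> s_le FX0.
set f := fun i => pexp_coeffs i * X i ^+ n.
have f0 i : (f i != 0) = (X i != 0).
  by rewrite mulf_eq0 !expf_eq0 eqz_nat (gtn_eqF (prime_gt0 p_pr)) n_gt0 andbF.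
have logf i : X i != 0 -> logn p `|f i| = (i + n * logn p `|X i|)%N.
  move=> Xi0; have Xn_gt0 : (0 < `|X i| ^ n)%N by rewrite expn_gt0 absz_gt0 Xi0.
  by rewrite abszM !abszX /= lognM ?pfactorK ?lognX // expn_gt0 prime_gt0.
have logf_mod i : X i != 0 -> (logn p `|f i| %% n = i)%N.
  by move=> Xi0; rewrite logf // addnC mulnC modnMDl modn_small // (leq_trans (ltn_ord i)).
have [i0 Xi0] : exists i0, X i0 != 0.
  apply/existsP; apply: contraNT FX0; rewrite negb_exists => /forallP X0.
  apply/eqP; rewrite /diag_form big1 // => i _.
  by move/negbNE/eqP: (X0 i) => ->; rewrite expr0n gtn_eqF // mulr0.
have finj : {in [pred i | f i != 0] &, injective (fun i => logn p `|f i|)}.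
  move=> i j; rewrite !inE !f0 => Xi_neq0 Xj_neq0 /(congr1 (modn^~ n)).
  by rewrite /= !logf_mod // => /val_inj.
have fi0 : f i0 != 0 by rewrite f0.
have [i fi [_ ->]] := logn_sum_injective p_pr fi0 finj.
by rewrite logf_mod -?f0.
Qed.

Theorem RF_pexp_not_dense (s : nat) : (s + s < n)%N ->
  ~ dense_in_Qp p (RF n (@pexp_coeffs s)).
Proof.
move=> s_lt; apply: (not_dense_of_vp_neq (t := s) p_pr) => _ [X [Y [FY0 ->]]] q0.
have FX0 : diag_form n pexp_coeffs X != 0 by apply: contra q0 => /eqP ->; rewrite mul0r.
rewrite vp_frac //; apply/eqP => vp_eq.
have s_le : (s <= n)%N by lia.
move: vp_eq (logn_diag_form_pexp s_le FX0) (logn_diag_form_pexp s_le FY0).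
set lX := logn p `|diag_form n pexp_coeffs X|.
set lY := logn p `|diag_form n pexp_coeffs Y| => vp_eq hX hY.
have lXE : lX = (lY + s)%N by lia.
move: hX; rewrite lXE -modnDml modn_small; first by rewrite ltnNge leq_addl.
by apply: ltn_trans s_lt; rewrite ltn_add2r.
Qed.

End NotDense.

Lemma odd_of_coprime_mul_pred (n p : nat) : coprime n (p * (p - 1)) -> odd n.
Proof.
move=> cop; apply/negPn/negP => n_even.
have even_pp1 : ~~ odd (p * (p - 1)).
  by rewrite oddM; case: p {cop} => //= p; rewrite subn1 /=; case: (odd p).
have : (2 %| gcdn n (p * (p - 1)))%N by rewrite dvdn_gcd !dvdn2 n_even even_pp1.
by rewrite (eqP cop).
Qed.

Theorem corollary1p4 (n p : nat) :
  (3 <= n)%N -> prime p -> coprime n (p * (p - 1)) ->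
  (forall (r : nat), (n./2 + 1 <= r)%N ->
     forall a : 'I_r -> int, (forall i, a i != 0) -> dense_in_Qp p (RF n a))
  /\
  (exists a : 'I_(n./2) -> int, (forall i, a i != 0) /\ ~ dense_in_Qp p (RF n a)).
Proof.
move=> n_ge3 p_pr n_coprime; have n_gt0 : (0 < n)%N by lia.
split=> [r r_ge a a0 | ].
  by apply: diag_form_RF_dense; rewrite // -addn1.
exists (@pexp_coeffs p n./2); split; first by move=> i; rewrite expf_neq0 // -lt0n prime_gt0.
apply: RF_pexp_not_dense => //.
have := odd_double_half n; rewrite (odd_of_coprime_mul_pred n_coprime) -addnn; lia.
Qed.
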